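(* Let $F:\mathbb{R}^n\rightrightarrows\mathbb{R}^p$ be a nearly convex set-valued mapping and $\Theta\subset\mathbb{R}^p$ a nearly convex set such that $\operatorname{ri}(\operatorname{rge} F)\cap\operatorname{ri}\Theta\neq\emptyset$. Define $F_0(x)=\operatorname{ri} F(x)$ for $x\in\mathbb{R}^n$. Then $$\operatorname{ri}\big(F^{-1}(\Theta)\big)=\operatorname{ri}(\operatorname{dom} F)\cap F_0^{-1}(\operatorname{ri}\Theta),$$ i.e. $\operatorname{ri}(F^{-1}(\Theta))=\{x\in\operatorname{ri}(\operatorname{dom} F):\operatorname{ri}F(x)\cap\operatorname{ri}\Theta\neq\emptyset\}$.
   Context: A set $\Omega\subset\mathbb{R}^k$ is nearly convex if there is a convex set $C$ with $C\subset\Omega\subset\overline{C}$. For an arbitrary set $\Omega$, $\operatorname{ri}\Omega=\{a\in\Omega:\exists\delta>0,\ B(a;\delta)\cap\operatorname{aff}\Omega\subset\Omega\}$. For $F:\mathbb{R}^n\rightrightarrows\mathbb{R}^p$: $\operatorname{dom} F=\{x:F(x)\neq\emptyset\}$, $\operatorname{rge} F=\bigcup_x F(x)$, $\operatorname{gph} F=\{(x,y):y\in F(x)\}$; $F$ is nearly convex if $\operatorname{gph} F$ is nearly convex. For $\Theta\subset\mathbb{R}^p$, $F^{-1}(\Theta)=\{x\in\mathbb{R}^n:F(x)\cap\Theta\neq\emptyset\}$. *)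

From HB Require Import structures.
From mathcomp Require Import all_boot all_order all_algebra.
From mathcomp Require Import boolp classical_sets reals.
Set Implicit Arguments. Unset Strict Implicit. Unset Printing Implicit Defensive.
Import Order.TTheory GRing.Theory Num.Theory.
Local Open Scope classical_set_scope.
Local Open Scope ring_scope.

Section Defs.
Variable R : realType.

Definition eball (k : nat) (a : 'rV[R]_k) (d : R) : set 'rV[R]_k :=
  [set b | \sum_(i < k) (a ord0 i - b ord0 i) ^+ 2 < d ^+ 2].

Definition eclosure (k : nat) (A : set 'rV[R]_k) : set 'rV[R]_k :=
  [set x | forall e : R, 0 < e -> exists y, A y /\ eball x e y].

Definition convex_set (k : nat) (C : set 'rV[R]_k) : Prop :=
  forall x y (t : R), C x -> C y -> 0 <= t -> t <= 1 ->
    C ((1 - t) *: x + t *: y).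

Definition nearly_convex (k : nat) (O : set 'rV[R]_k) : Prop :=
  exists C : set 'rV[R]_k, convex_set C /\ C `<=` O /\ O `<=` eclosure C.

Definition aff (k : nat) (O : set 'rV[R]_k) : set 'rV[R]_k :=
  [set z | exists (m : nat) (v : 'I_m -> 'rV[R]_k) (l : 'I_m -> R),
     (forall i, O (v i)) /\ \sum_(i < m) l i = 1 /\ z = \sum_(i < m) l i *: v i].

Definition ri (k : nat) (O : set 'rV[R]_k) : set 'rV[R]_k :=
  [set a | O a /\ exists d : R, 0 < d /\ eball a d `&` aff O `<=` O].

Definition sv_dom (n p : nat) (F : 'rV[R]_n -> set 'rV[R]_p) : set 'rV[R]_n :=
  [set x | F x !=set0].
Definition sv_rge (n p : nat) (F : 'rV[R]_n -> set 'rV[R]_p) : set 'rV[R]_p :=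
  [set y | exists x, F x y].
Definition sv_gph (n p : nat) (F : 'rV[R]_n -> set 'rV[R]_p) : set 'rV[R]_(n + p) :=
  [set z | exists x y, F x y /\ z = row_mx x y].
Definition nearly_convex_sv (n p : nat) (F : 'rV[R]_n -> set 'rV[R]_p) : Prop :=
  nearly_convex (sv_gph F).
Definition sv_preimage (n p : nat) (F : 'rV[R]_n -> set 'rV[R]_p)
  (T : set 'rV[R]_p) : set 'rV[R]_n :=
  [set x | (F x `&` T) !=set0].

End Defs.

From HB Require Import structures.
From mathcomp Require Import all_boot all_order all_algebra.
From mathcomp Require Import boolp classical_sets reals.
From mathcomp Require Import ring lra.
Import Order.TTheory GRing.Theory Num.Theory.
Local Open Scope classical_set_scope.
Local Open Scope ring_scope.
Set Implicit Arguments. Unset Strict Implicit. Unset Printing Implicit Defensive.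

(* The preimage F^{-1}(Theta) is the projection onto the first factor of
   P = gph F meet (R^n x Theta), so the theorem follows from two general facts
   about a nearly convex set O in R^k:
   - extension criterion: z is in ri O iff z is in O and, for each y in O,
     the segment from y to z can be prolonged beyond z inside O;
   - linear images: ri (f O) = f (ri O) for a linear map f.
   Both rest on a coordinate description of aff O: if C is a convex core of O
   (C <= O <= cl C) then aff O is the closed flat v0 + rowspace W spanned by a
   frame of points of C, C contains a simplex with nonempty interior in this
   flat, and the line segment principle holds.  With these tools, ri (gph F)
   consists of the (x, y) with x in ri (dom F) and y in ri F(x), and the
   qualification condition ri (rge F) meet ri Theta <> 0 gives
   ri P = ri (gph F) meet (R^n x ri Theta); projecting yields the theorem. *)

Section RelativeInterior.
Variable R : realType.
Implicit Types (k m : nat).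

(* Sup-norm neighbourhoods: b lies in the box of radius e around a.  They are
   equivalent to Euclidean balls and easier to handle coordinatewise. *)
Definition box k (a : 'rV[R]_k) (e : R) (b : 'rV[R]_k) : Prop :=
  forall i, `|a ord0 i - b ord0 i| < e.

Lemma eball_box k (a b : 'rV[R]_k) d : 0 < d -> eball a d b -> box a d b.
Proof.
rewrite /eball /= => d0 ab i.
have sq_i : (a ord0 i - b ord0 i) ^+ 2 < d ^+ 2.
  apply: le_lt_trans ab; rewrite (bigD1 i) //= lerDl.
  by apply: sumr_ge0 => j _; exact: sqr_ge0.
rewrite ltr_norml; apply/andP; split; nra.
Qed.

Lemma box_eball k (a b : 'rV[R]_k) d :
  0 < d -> box a (d / k.+1%:R) b -> eball a d b.
Proof.
move=> d0; rewrite /eball /=.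
have dE : d = d / k.+1%:R * k.+1%:R by rewrite mulfVK // pnatr_eq0.
have e0 : 0 < d / k.+1%:R by rewrite divr_gt0 // ltr0n.
move: (d / k.+1%:R) e0 dE => e e0 dE ab.
apply: (@le_lt_trans _ _ (\sum_(i < k) e ^+ 2)).
  apply: ler_sum => i _; have := ab i; rewrite ltr_norml => /andP [].
  move: (a ord0 i - b ord0 i) => x; nra.
rewrite sumr_const card_ord dE -mulr_natr -natr1.
have : 0 <= k%:R :> R by rewrite ler0n.
nra.
Qed.

Lemma box_refl k (a : 'rV[R]_k) e : 0 < e -> box a e a.
Proof. by move=> e0 i; rewrite subrr normr0. Qed.

Lemma eclosure_box k (C : set 'rV[R]_k) x :
  eclosure C x <-> (forall e, 0 < e -> exists y, C y /\ box x e y).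
Proof.
split=> clx e e0.
  have [y [Cy xy]] := clx e e0; exists y; split => //; exact: eball_box.
have [y [Cy xy]] := clx (e / k.+1%:R) (divr_gt0 e0 (ltr0Sn _ _)).
by exists y; split => //; exact: box_eball.
Qed.

Lemma ri_box k (O : set 'rV[R]_k) a :
  ri O a <-> (O a /\ exists e, 0 < e /\ forall b, box a e b -> aff O b -> O b).
Proof.
split=> -[Oa [d [d0 sub]]]; split => //.
  exists (d / k.+1%:R); split; first by rewrite divr_gt0 // ltr0n.
  by move=> b ab affb; apply: sub; split => //; exact: box_eball.
by exists d; split => // b [ab affb]; apply: sub => //; exact: eball_box.
Qed.

Definition flat k m (v0 : 'rV[R]_k) (W : 'M[R]_(m, k)) : set 'rV[R]_k :=
  [set z | (z - v0 <= W)%MS].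

Lemma flat_comb k m v0 (W : 'M[R]_(m, k)) x y (al be : R) :
  flat v0 W x -> flat v0 W y -> al + be = 1 -> flat v0 W (al *: x + be *: y).
Proof.
rewrite /flat /= => fx fy ab.
have -> : al *: x + be *: y - v0 = al *: (x - v0) + be *: (y - v0).
  have -> : be = 1 - al by rewrite -ab addrC addKr.
  by apply/rowP => j; rewrite !mxE; ring.
by apply: addmx_sub; apply: scalemx_sub.
Qed.

Lemma aff_sub_flat k m (O : set 'rV[R]_k) v0 (W : 'M[R]_(m, k)) :
  O `<=` flat v0 W -> aff O `<=` flat v0 W.
Proof.
move=> Osub z [q [v [l [Ov [l1 ->]]]]]; rewrite /flat /=.
have -> : \sum_i l i *: v i - v0 = \sum_i l i *: (v i - v0).
  under [RHS]eq_bigr do rewrite scalerBr.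
  by rewrite sumrB -scaler_suml l1 scale1r.
by apply: summx_sub => i _; apply: scalemx_sub; exact: Osub.
Qed.

Lemma flat_sub_aff k m (O : set 'rV[R]_k) v0 (W : 'M[R]_(m, k)) :
  O v0 -> (forall i, O (v0 + row i W)) -> flat v0 W `<=` aff O.
Proof.
move=> Ov0 Orow z; rewrite /flat /= => fz.
set x := (z - v0) *m pinvmx W.
have xW : x *m W = z - v0 by rewrite mulmxKpV.
exists m.+1.
exists (fun j => if unlift ord0 j is Some i then v0 + row i W else v0).
exists (fun j => if unlift ord0 j is Some i then x ord0 i else 1 - \sum_i x ord0 i).
split; first by move=> j; case: (unlift ord0 j).
rewrite !big_ord_recl !unlift_none.
have liftE (i : 'I_m) : unlift ord0 (lift ord0 i) = Some i := liftK ord0 i.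
split.
  rewrite [X in _ + X = _](eq_bigr (fun i => x ord0 i)) ?subrK // => i _.
  by rewrite liftE.
rewrite [X in _ = _ + X](eq_bigr (fun i => x ord0 i *: v0 + x ord0 i *: row i W));
  last by move=> i _; rewrite liftE scalerDr.
rewrite big_split /= -scaler_suml -mulmx_sum_row xW.
by rewrite addrA -scalerDl subrK scale1r addrC subrK.
Qed.

Lemma rowmul_bound k m (u : 'rV[R]_k) (M : 'M[R]_(k, m)) e j :
  (forall i, `|u ord0 i| <= e) -> `|(u *m M) ord0 j| <= e * \sum_i `|M i j|.
Proof.
move=> ue; rewrite mxE; apply: le_trans (ler_norm_sum _ _ _) _.
rewrite mulr_sumr; apply: ler_sum => i _; rewrite normrM.
by apply: ler_wpM2r => //; exact: ue.
Qed.

Lemma arbitrarily_small_eq0 (x S : R) :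
  0 <= S -> (forall e, 0 < e -> `|x| <= e * S) -> x = 0.
Proof.
move=> S0 small; apply/eqP; apply: contraT => x0.
have S1 : 0 < S + 1 by rewrite ltr_pwDr.
have nx0 : 0 < `|x| by rewrite normr_gt0.
have := small (`|x| / (S + 1)) (divr_gt0 nx0 S1).
rewrite mulrAC ler_pdivlMr //; move: `|x| nx0 => y; nra.
Qed.

(* Flats are closed: membership is the vanishing of (z - v0) *m cokermx W,
   which depends continuously on z. *)
Lemma flat_closed k m v0 (W : 'M[R]_(m, k)) z :
  (forall e, 0 < e -> exists y, flat v0 W y /\ box z e y) -> flat v0 W z.
Proof.
move=> approx; rewrite /flat /= submxE; apply/eqP/rowP => j; rewrite [RHS]mxE.
set K := cokermx W.
apply: (@arbitrarily_small_eq0 _ (\sum_i `|K i j|)); first exact: sumr_ge0.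
move=> e e0; have [y [fy zy]] := approx e e0.
move: fy; rewrite /flat /= submxE => /eqP yK.
have -> : (z - v0) *m K = (z - y) *m K.
  have -> : z - v0 = (z - y) + (y - v0) by rewrite addrA subrK.
  by rewrite mulmxDl yK addr0.
by apply: rowmul_bound => i; rewrite !mxE; apply: ltW; exact: zy.
Qed.

Lemma convex_star_comb k (C : set 'rV[R]_k) v0 : convex_set C -> C v0 ->
  forall m (v : 'I_m -> 'rV[R]_k) (x : 'I_m -> R),
  (forall j, C (v j)) -> (forall j, 0 <= x j) -> \sum_j x j <= 1 ->
  C (v0 + \sum_j x j *: (v j - v0)).
Proof.
move=> convC Cv0; elim=> [|m IH] v x Cv x0 x1; first by rewrite big_ord0 addr0.
move: x1; rewrite !big_ord_recr /=; set t := x ord_max; move=> x1.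
have rest0 : 0 <= \sum_(i < m) x (widen_ord (leqnSn m) i) by apply: sumr_ge0.
have [t1|t1] := eqVneq t 1.
  have rest_eq0 : \sum_(i < m) x (widen_ord (leqnSn m) i) = 0.
    by apply/eqP; rewrite eq_le rest0 andbT; lra.
  rewrite big1 => [|i _]; last by rewrite (psumr_eq0P (fun i _ => x0 _) rest_eq0) // scale0r.
  by rewrite add0r t1 scale1r addrC subrK.
have t0 : 0 <= t := x0 ord_max.
have tlt1 : t < 1 by rewrite lt_neqAle t1 /=; lra.
have t_ne1 : 1 - t != 0 by rewrite subr_eq0 eq_sym.
(* renormalize the first m weights, then take one convex step towards v ord_max *)
pose q := v0 + \sum_(i < m)
  ((1 - t)^-1 * x (widen_ord (leqnSn m) i)) *: (v (widen_ord (leqnSn m) i) - v0).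
have Cq : C q.
  apply: IH => [j|j|]; first exact: Cv.
    by rewrite mulr_ge0 // invr_ge0 subr_ge0 ltW.
  by rewrite -mulr_sumr ler_pdivrMl ?subr_gt0 // mulr1; lra.
have := convC q (v ord_max) t Cq (Cv _) t0 (ltW tlt1).
congr C; rewrite /q scalerDr scaler_sumr.
rewrite (eq_bigr (fun i => x (widen_ord (leqnSn m) i) *: (v (widen_ord (leqnSn m) i) - v0)));
  last by move=> i _; rewrite scalerA mulrA (mulfV t_ne1) mul1r.
by move: (\sum_i _) => S; apply/rowP => j; rewrite !mxE; ring.
Qed.

Lemma row_free_col_mx k m (W : 'M[R]_(m, k)) (u : 'rV[R]_k) :
  row_free W -> ~ (u <= W)%MS -> row_free (col_mx W u).
Proof.
move=> freeW uW.
have u0 : u != 0 by apply/eqP => u0; apply: uW; rewrite u0 sub0mx.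
have ru : \rank u = 1%N by rewrite rank_rV u0.
have rcap : \rank (W :&: u)%MS = 0%N.
  have := mxrankS (capmxSr W u); rewrite ru.
  case: (\rank (W :&: u)%MS) (mxrank_leqif_eq (capmxSr W u)) => [//|[|//]] eq1 _.
  exfalso; apply: uW; rewrite ru in eq1; have := eq1.2.
  rewrite eqxx => /esym/eqmxP capE.
  by apply: submx_trans (capmxSl W u); rewrite -capE.
rewrite /row_free -(addsmxE W u).1.
have := mxrank_sum_cap W u; rewrite rcap ru addn0 => ->.
by move: freeW; rewrite /row_free => /eqP ->; rewrite addn1.
Qed.

(* Otherwise
   one could adjoin independent rows forever, exceeding the dimension k. *)
Lemma convex_frame k (C : set 'rV[R]_k) v0 : C v0 ->
  exists m (W : 'M[R]_(m, k)),
    row_free W /\ (forall i, C (v0 + row i W)) /\ C `<=` flat v0 W.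
Proof.
move=> Cv0; apply: contrapT => noframe.
have grow q : exists m (W : 'M[R]_(m, k)),
    (q <= m)%N /\ row_free W /\ (forall i, C (v0 + row i W)).
  elim: q => [|q [m [W [qm [freeW Crow]]]]].
    exists 0%N, (0 : 'M_(0, k)); split => //; split; last by case.
    by rewrite /row_free mxrank0.
  have [c [Cc cW]] : exists c, C c /\ ~ (c - v0 <= W)%MS.
    apply: contrapT => all_in; apply: noframe; exists m, W; split => //.
    split => // c Cc; apply: contrapT => cW; apply: all_in; by exists c.
  exists (m + 1)%N, (col_mx W (c - v0)); split; first by rewrite addn1.
  split; first exact: row_free_col_mx.
  move=> i; rewrite -(splitK i); case: (split i) => j /=.
    by rewrite rowKu.
  by rewrite rowKd row_id addrC subrK.
have [m [W [km [freeW _]]]] := grow k.+1.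
move: freeW; rewrite /row_free => /eqP rW.
by have := rank_leq_col W; rewrite rW => /(leq_trans km); rewrite ltnn.
Qed.

Lemma near_barycenter m (d : 'rV[R]_m) (w := m.+1%:R^-1) :
  (forall j, `|d ord0 j| <= w ^+ 2) ->
  (forall j, 0 <= w + d ord0 j) /\ \sum_j (w + d ord0 j) <= 1.
Proof.
move=> dsmall.
have w0 : 0 < w by rewrite invr_gt0 ltr0n.
have wm : w * m%:R = 1 - w.
  have : w * m.+1%:R = 1 by rewrite /w mulVf // pnatr_eq0.
  by rewrite -natr1 mulrDr mulr1; lra.
have w1 : w <= 1 by have := mulr_ge0 (ltW w0) (ler0n R m); lra.
have dlow j : - (w * w) <= d ord0 j.
  by have := dsmall j; rewrite expr2 ler_norml => /andP [].
split=> [j|]; first by have := dlow j; nra.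
rewrite big_split /= sumr_const card_ord -mulr_natr wm.
have : \sum_j d ord0 j <= \sum_(j < m) w ^+ 2.
  by apply: ler_sum => j _; have := dsmall j; rewrite ler_norml => /andP [].
rewrite sumr_const card_ord -mulr_natr expr2 -mulrA wm; nra.
Qed.

Section ConvexFrame.
Variables (k m : nat) (C : set 'rV[R]_k) (v0 : 'rV[R]_k) (W : 'M[R]_(m, k)).
Hypotheses (convC : convex_set C) (Cv0 : C v0) (freeW : row_free W).
Hypothesis Crow : forall i, C (v0 + row i W).

Lemma frame_simplex (x : 'rV[R]_m) :
  (forall j, 0 <= x ord0 j) -> \sum_j x ord0 j <= 1 -> C (v0 + x *m W).
Proof.
move=> x0 x1.
have -> : v0 + x *m W = v0 + \sum_j x ord0 j *: ((v0 + row j W) - v0).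
  by rewrite mulmx_sum_row; congr (_ + _); apply: eq_bigr => j _; rewrite addrC addKr.
exact: convex_star_comb.
Qed.

Lemma convex_frame_interior :
  exists b, C b /\ exists e, 0 < e /\ forall z, box b e z -> flat v0 W z -> C z.
Proof.
pose w : R := m.+1%:R^-1.
have w0 : 0 < w by rewrite invr_gt0 ltr0n.
pose b := v0 + const_mx w *m W.
pose P := pinvmx W.
pose S := \sum_j \sum_i `|P i j|.
have S0 : 0 <= S by apply: sumr_ge0 => j _; apply: sumr_ge0.
have colS j : \sum_i `|P i j| <= S.
  rewrite /S (bigD1 j) //= lerDl; apply: sumr_ge0 => j' _; exact: sumr_ge0.
have S1 : 0 < S + 1 by rewrite ltr_pwDr.
pose e := w ^+ 2 / (S + 1).
have e0 : 0 < e by rewrite divr_gt0 // exprn_gt0.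
have eS : e * S <= w ^+ 2.
  by rewrite /e mulrAC ler_pdivrMr // ler_wpM2l ?lerDl // exprn_ge0 // ltW.
have nbhd z : box b e z -> flat v0 W z -> C z.
  rewrite /flat /= => bz fz.
  set d := (z - b) *m P.
  have coords : (z - v0) *m P = const_mx w + d.
    have -> : z - v0 = (z - b) + const_mx w *m W by rewrite /b opprD addrA subrK.
    by rewrite mulmxDl mulmxKp // addrC.
  have zE : z = v0 + (const_mx w + d) *m W.
    by rewrite -coords mulmxKpV // addrC subrK.
  have dsmall j : `|d ord0 j| <= w ^+ 2.
    apply: le_trans (@rowmul_bound _ _ _ _ e _ _) _ => [i|].
      by rewrite 2!mxE distrC; apply: ltW; exact: bz.
    by apply: le_trans eS; apply: ler_wpM2l; [exact: ltW | exact: colS].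
  have [pos sum1] := near_barycenter dsmall.
  rewrite zE; apply: frame_simplex.
    by move=> j; rewrite 2!mxE; exact: pos.
  by under eq_bigr do rewrite 2!mxE.
exists b; split; last by exists e.
by apply: nbhd; [exact: box_refl | rewrite /flat /= /b addrC addKr submxMl].
Qed.

End ConvexFrame.

(* a lies in C with a box neighbourhood whose trace on A is contained in C;
   for A = aff O this is relative interiority. *)
Definition rel_int k (C A : set 'rV[R]_k) (a : 'rV[R]_k) : Prop :=
  C a /\ exists e, 0 < e /\ forall z, box a e z -> A z -> C z.

(* Coordinatewise estimate behind the line segment principle: solving
   Z' = (1 - t) B' + t A' for A' moves A by less than e1. *)
Lemma segment_coord_bound (t e1 Z Z' B B' A : R) : 0 < t -> t <= 1 -> 0 < e1 ->
  `|Z - Z'| < t * e1 / 2 -> `|B - B'| < t * e1 / 2 -> Z = (1 - t) * B + t * A ->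
  `|A - t^-1 * (Z' - (1 - t) * B')| < e1.
Proof.
move=> t0 t1 e0 ZZ' BB' ZE.
have -> : A - t^-1 * (Z' - (1 - t) * B') = t^-1 * ((Z - Z') + (1 - t) * (B' - B)).
  by rewrite ZE; field; rewrite gt_eqF.
rewrite normrM gtr0_norm ?invr_gt0 // mulrC ltr_pdivrMr //.
move: ZZ' BB'; rewrite !ltr_norml => /andP [? ?] /andP [? ?].
apply/andP; split; nra.
Qed.

(* Line segment principle: if a is relatively interior to the convex set C
   and b is in its closure, every point of ]b, a] is relatively interior.
   A point z' near (1-t) b + t a is (1-t) b' + t a' with b' in C near b and
   a' near a in the flat, hence a' in C. *)
Lemma rel_int_segment k m (C : set 'rV[R]_k) v0 (W : 'M[R]_(m, k)) a b (t : R) :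
  convex_set C -> C `<=` flat v0 W -> rel_int C (flat v0 W) a ->
  eclosure C b -> 0 < t -> t <= 1 ->
  rel_int C (flat v0 W) ((1 - t) *: b + t *: a).
Proof.
move=> convC Cflat [Ca [e1 [e10 nbhd_a]]] clb t0 t1.
have fb : flat v0 W b.
  apply: flat_closed => e e0; have [y [Cy by_]] := (eclosure_box C b).1 clb e e0.
  by exists y; split => //; apply: Cflat.
pose e := t * e1 / 2.
have e0 : 0 < e by rewrite /e divr_gt0 // mulr_gt0.
suff nbhd z' : box ((1 - t) *: b + t *: a) e z' -> flat v0 W z' -> C z'.
  split; last by exists e.
  apply: nbhd; first exact: box_refl.
  by apply: flat_comb => //; [apply: Cflat | rewrite subrK].
move=> zz' fz'.
have [b' [Cb' bb']] := (eclosure_box C b).1 clb e e0.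
pose a' := t^-1 *: (z' - (1 - t) *: b').
have fa' : flat v0 W a'.
  have -> : a' = t^-1 *: z' + (- ((1 - t) * t^-1)) *: b'.
    by apply/rowP => j; rewrite !mxE; ring.
  by apply: flat_comb => //; [apply: Cflat | field; rewrite gt_eqF].
have Ca' : C a'.
  apply: nbhd_a => // i; rewrite /a' !mxE.
  apply: (@segment_coord_bound t e1 (((1 - t) *: b + t *: a) ord0 i) _ (b ord0 i)) => //.
  by rewrite !mxE.
have := convC b' a' t Cb' Ca' (ltW t0) t1.
by congr C; apply/rowP => j; rewrite /a' !mxE; field; rewrite gt_eqF.
Qed.

Lemma rel_int_extend k m (C : set 'rV[R]_k) v0 (W : 'M[R]_(m, k)) c z (s : R) :
  convex_set C -> C `<=` flat v0 W -> rel_int C (flat v0 W) c -> 0 < s ->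
  eclosure C (z + s *: (z - c)) -> rel_int C (flat v0 W) z.
Proof.
move=> convC Cflat cint s0 cl.
have s1 : 0 < 1 + s by rewrite ltr_pwDl // ltW.
have := rel_int_segment convC Cflat cint cl (t := s / (1 + s)).
rewrite divr_gt0 // ler_pdivrMr // mul1r lerDr ltW //.
move=> /(_ isT isT); congr rel_int.
by apply/rowP => j; rewrite !mxE; field; rewrite gt_eqF.
Qed.

Lemma nearly_convex_frame k (O : set 'rV[R]_k) : nearly_convex O -> O !=set0 ->
  exists C v0 m (W : 'M[R]_(m, k)) c,
    [/\ convex_set C, C `<=` O, O `<=` eclosure C,
        aff O = flat v0 W & C `<=` flat v0 W /\ rel_int C (flat v0 W) c].
Proof.
move=> [C [convC [CO Ocl]]] [x Ox].
have [v0 [Cv0 _]] := Ocl x Ox 1 ltr01.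
have [m [W [freeW [Crow Cflat]]]] := convex_frame Cv0.
have [c [Cc [e [e0 nbhd]]]] := convex_frame_interior convC Cv0 freeW Crow.
exists C, v0, m, W, c; split => //.
- apply/seteqP; split; last by apply: flat_sub_aff => [|i]; apply: CO.
  apply: aff_sub_flat => z Oz; apply: flat_closed => e' e'0.
  have [y [Cy zy]] := (eclosure_box C z).1 (Ocl z Oz) e' e'0.
  by exists y; split => //; apply: Cflat.
- by split => //; split => //; exists e.
Qed.

Lemma aff_line k (O : set 'rV[R]_k) x y (al be : R) :
  O x -> O y -> al + be = 1 -> aff O (al *: x + be *: y).
Proof.
move=> Ox Oy ab.
exists 2%N, (fun i : 'I_2 => if val i == 0%N then x else y),
  (fun i : 'I_2 => if val i == 0%N then al else be).
split; first by move=> i; case: ifP.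
by rewrite !big_ord_recr !big_ord0 /= !add0r.
Qed.

Lemma small_steps_box k (a c : 'rV[R]_k) e0 : 0 < e0 ->
  exists e, 0 < e /\ forall s, 0 < s -> s <= e -> box a e0 (a + s *: (a - c)).
Proof.
move=> e00.
pose N := \sum_i `|a ord0 i - c ord0 i|.
have N1 : 0 < N + 1 by rewrite ltr_pwDr // sumr_ge0.
exists (e0 / (N + 1)); split; first by rewrite divr_gt0.
move=> s s0 se i; rewrite !mxE.
rewrite (_ : _ - _ = - (s * (a ord0 i - c ord0 i))); last by ring.
have Ni : `|a ord0 i - c ord0 i| <= N.
  by rewrite /N (bigD1 i) //= lerDl; apply: sumr_ge0.
have sN : s * (N + 1) <= e0 by rewrite -ler_pdivlMr.
rewrite normrN normrM gtr0_norm //.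
move: `|_| Ni (normr_ge0 (a ord0 i - c ord0 i)) => y; nra.
Qed.

Lemma ri_extend k (O : set 'rV[R]_k) z : ri O z ->
  forall y, O y -> exists e, 0 < e /\
    forall s, 0 < s -> s <= e -> O (z + s *: (z - y)).
Proof.
move=> /ri_box [Oz [e0 [e00 nbhd]]] y Oy.
have [e [e0' small]] := small_steps_box z y e00.
exists e; split => // s s0 se; apply: nbhd; first exact: small.
have -> : z + s *: (z - y) = (1 + s) *: z + (- s) *: y.
  by apply/rowP => j; rewrite !mxE; ring.
by apply: aff_line => //; ring.
Qed.

Lemma ri_rel_int k (O C : set 'rV[R]_k) v0 m (W : 'M[R]_(m, k)) c :
  convex_set C -> C `<=` O -> O `<=` eclosure C -> aff O = flat v0 W ->
  C `<=` flat v0 W -> rel_int C (flat v0 W) c ->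
  forall a, ri O a <-> rel_int C (flat v0 W) a.
Proof.
move=> convC CO Ocl affO Cflat cint a; split.
  move=> /ri_extend /(_ c (CO _ cint.1)) [e [e0 ext]].
  by apply: (rel_int_extend convC Cflat cint e0); apply/Ocl/ext.
move=> [Ca [e [e0 nbhd]]]; apply/ri_box; split; first exact: CO.
by exists e; split => // z az; rewrite affO => fz; apply/CO/nbhd.
Qed.

Lemma extend_ri k (O : set 'rV[R]_k) z : nearly_convex O -> O z ->
  (forall y, O y -> exists s, 0 < s /\ O (z + s *: (z - y))) -> ri O z.
Proof.
move=> ncO Oz ext.
have [C [v0 [m [W [c [convC CO Ocl affO [Cflat cint]]]]]]] :=
  nearly_convex_frame ncO (ex_intro _ z Oz).
apply/(ri_rel_int convC CO Ocl affO Cflat cint).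
have [s [s0 Os]] := ext c (CO _ cint.1).
by apply: (rel_int_extend convC Cflat cint s0); apply: Ocl.
Qed.

Lemma ri_nonempty k (O : set 'rV[R]_k) : nearly_convex O -> O !=set0 -> ri O !=set0.
Proof.
move=> ncO O0.
have [C [v0 [m [W [c [convC CO Ocl affO [Cflat cint]]]]]]] := nearly_convex_frame ncO O0.
by exists c; apply/(ri_rel_int convC CO Ocl affO Cflat cint).
Qed.

Lemma ri_segment k (O : set 'rV[R]_k) a b (t : R) : nearly_convex O ->
  ri O a -> O b -> 0 < t -> t <= 1 -> ri O ((1 - t) *: b + t *: a).
Proof.
move=> ncO ria Ob t0 t1.
have [C [v0 [m [W [c [convC CO Ocl affO [Cflat cint]]]]]]] :=
  nearly_convex_frame ncO (ex_intro _ b Ob).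
have riE := ri_rel_int convC CO Ocl affO Cflat cint.
by apply/riE; apply: rel_int_segment => //; [apply/riE | apply: Ocl].
Qed.

(* A convex core of O absorbing segments from ri O to its closure; used to
   show that intersections with ri-meeting sets stay nearly convex. *)
Lemma nearly_convex_core k (O : set 'rV[R]_k) : nearly_convex O ->
  exists C, [/\ convex_set C, C `<=` O, O `<=` eclosure C &
    forall a b (t : R), ri O a -> eclosure C b -> 0 < t -> t <= 1 ->
      C ((1 - t) *: b + t *: a)].
Proof.
move=> ncO; have [O0|Oempty] := pselect (O !=set0).
  have [C [v0 [m [W [c [convC CO Ocl affO [Cflat cint]]]]]]] := nearly_convex_frame ncO O0.
  have riE := ri_rel_int convC CO Ocl affO Cflat cint.
  exists C; split => // a b t ria clb t0 t1.
  by have [] := rel_int_segment convC Cflat ((riE a).1 ria) clb t0 t1.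
have [C [convC [CO Ocl]]] := ncO.
by exists C; split => // a b t [Oa _]; exfalso; apply: Oempty; exists a.
Qed.

Lemma extension_comb k (z w : 'rV[R]_k) (s : R) : 0 < s ->
  (1 - s / (1 + s)) *: (z + s *: (z - w)) + (s / (1 + s)) *: w = z.
Proof.
move=> s0; have s1 : 1 + s != 0 by rewrite gt_eqF // ltr_pwDl // ltW.
by apply/rowP => j; rewrite !mxE; field.
Qed.

Lemma extension_weight (s : R) : 0 < s -> 0 < s / (1 + s) /\ s / (1 + s) <= 1.
Proof.
move=> s0; have s1 : 0 < 1 + s by rewrite ltr_pwDl // ltW.
by split; [rewrite divr_gt0 | rewrite ler_pdivrMr // mul1r lerDr ltW].
Qed.

Section LinearImage.
Variables (k j : nat) (f : 'rV[R]_k -> 'rV[R]_j).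
Hypothesis f_lin : forall x y (al be : R), f (al *: x + be *: y) = al *: f x + be *: f y.
Hypothesis f_box : forall x y e, box x e y -> box (f x) e (f y).

Lemma image_extension z w (s : R) : f (z + s *: (z - w)) = f z + s *: (f z - f w).
Proof.
have -> : z + s *: (z - w) = (1 + s) *: z + (- s) *: w.
  by apply/rowP => i; rewrite !mxE; ring.
by rewrite f_lin; apply/rowP => i; rewrite !mxE; ring.
Qed.

Lemma nearly_convex_image (O : set 'rV[R]_k) : nearly_convex O -> nearly_convex (f @` O).
Proof.
move=> [C [convC [CO Ocl]]]; exists (f @` C); split; last split.
- move=> _ _ t [a Ca <-] [b Cb <-] t0 t1; exists ((1 - t) *: a + t *: b).
    exact: convC.
  by rewrite f_lin.
- by move=> _ [a Ca <-]; exists a => //; apply: CO.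
- move=> _ [a Oa <-]; apply/eclosure_box => e e0.
  have [y [Cy ay]] := (eclosure_box C a).1 (Ocl a Oa) e e0.
  by exists (f y); split; [exists y | apply: f_box].
Qed.

(* A point f a of ri (f O) is reached from a relative interior point w of O
   by prolonging the segment from f w through f a to some f z1 with z1 in O;
   the corresponding point of ]z1, w] lies in ri O and maps to f a. *)
Lemma ri_image (O : set 'rV[R]_k) : nearly_convex O -> ri (f @` O) = f @` (ri O).
Proof.
move=> ncO; apply/seteqP; split=> [u riu|_ [z riz <-]].
  have [a Oa _] := riu.1.
  have [w riw] := ri_nonempty ncO (ex_intro _ a Oa).
  have [e [e0 ext]] := ri_extend riu (ex_intro2 _ _ w riw.1 erefl).
  have [z1 Oz1 z1E] := ext e e0 (lexx e).
  have [t0 t1] := extension_weight e0.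
  exists ((1 - e / (1 + e)) *: z1 + (e / (1 + e)) *: w); first exact: ri_segment.
  by rewrite f_lin z1E extension_comb.
apply: extend_ri; first exact: nearly_convex_image.
  by exists z => //; exact: riz.1.
move=> _ [y Oy <-]; have [e [e0 ext]] := ri_extend riz Oy.
by exists e; split => //; exists (z + e *: (z - y)); [exact: ext | exact: image_extension].
Qed.

End LinearImage.

Section Graph.
Variables (n p : nat) (F : 'rV[R]_n -> set 'rV[R]_p).

Definition xpart (z : 'rV[R]_(n + p)) : 'rV[R]_n := lsubmx z.
Definition ypart (z : 'rV[R]_(n + p)) : 'rV[R]_p := rsubmx z.

Lemma xpart_lin x y (al be : R) : xpart (al *: x + be *: y) = al *: xpart x + be *: xpart y.
Proof. by apply/rowP => j; rewrite !mxE. Qed.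

Lemma ypart_lin x y (al be : R) : ypart (al *: x + be *: y) = al *: ypart x + be *: ypart y.
Proof. by apply/rowP => j; rewrite !mxE. Qed.

Lemma xpart_box x y e : box x e y -> box (xpart x) e (xpart y).
Proof. by move=> xy i; rewrite !mxE; apply: xy. Qed.

Lemma ypart_box x y e : box x e y -> box (ypart x) e (ypart y).
Proof. by move=> xy i; rewrite !mxE; apply: xy. Qed.

Lemma gph_row_mx x y : sv_gph F (row_mx x y) <-> F x y.
Proof.
split=> [[x' [y' [Fxy' /eq_row_mx [-> ->]]]] //|Fxy].
by exists x, y.
Qed.

Lemma gph_split z : sv_gph F z -> z = row_mx (xpart z) (ypart z) /\ F (xpart z) (ypart z).
Proof. by move=> [x [y [Fxy ->]]]; rewrite /xpart /ypart row_mxKl row_mxKr. Qed.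

Lemma dom_proj : sv_dom F = xpart @` sv_gph F.
Proof.
apply/seteqP; split=> [x [y Fxy]|_ [z /gph_split [_ Fz] <-]]; last by exists (ypart z).
by exists (row_mx x y); [apply/gph_row_mx | rewrite /xpart row_mxKl].
Qed.

Lemma rge_proj : sv_rge F = ypart @` sv_gph F.
Proof.
apply/seteqP; split=> [y [x Fxy]|_ [z /gph_split [_ Fz] <-]]; last by exists (xpart z).
by exists (row_mx x y); [apply/gph_row_mx | rewrite /ypart row_mxKr].
Qed.

Definition gph_over (T : set 'rV[R]_p) : set 'rV[R]_(n + p) :=
  [set z | sv_gph F z /\ T (ypart z)].

Lemma preimage_proj (T : set 'rV[R]_p) : sv_preimage F T = xpart @` gph_over T.
Proof.
apply/seteqP; split=> [x [y [Fxy Ty]]|_ [z [/gph_split [_ Fz] Tz] <-]].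
  exists (row_mx x y); last by rewrite /xpart row_mxKl.
  by split; [apply/gph_row_mx | rewrite /ypart row_mxKr].
by exists (ypart z).
Qed.

(* The fibre F x sits inside the graph as the slice {x} x F x, so relative
   interiority of (x, y) in the graph passes to y in F x. *)
Lemma ri_gph_fibre x y : ri (sv_gph F) (row_mx x y) -> ri (F x) y.
Proof.
move=> /ri_box [Gxy [e [e0 nbhd]]].
apply/ri_box; split; first exact/gph_row_mx.
exists e; split => // y' yy' [q [v [l [Fv [l1 y'E]]]]].
apply/gph_row_mx; apply: nbhd.
  move=> i; rewrite -(splitK i); case: (split i) => j /=.
    by rewrite !row_mxEl subrr normr0.
  by rewrite !row_mxEr; apply: yy'.
exists q, (fun i => row_mx x (v i)), l; split; first by move=> i; apply/gph_row_mx.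
split => //; apply/rowP => i; rewrite summxE.
rewrite -(splitK i); case: (split i) => j /=.
  rewrite row_mxEl; under eq_bigr do rewrite mxE row_mxEl.
  by rewrite -mulr_suml l1 mul1r.
rewrite row_mxEr y'E summxE; apply: eq_bigr => r _.
by rewrite [LHS]mxE [RHS]mxE row_mxEr.
Qed.

Hypothesis ncF : nearly_convex (sv_gph F).

(* For the converse
   inclusion lift x to a relative interior point (x, b) of the graph and
   apply the line segment principle to the prolongation of [b, y]. *)
Lemma ri_gph x y : ri (sv_gph F) (row_mx x y) <-> ri (sv_dom F) x /\ ri (F x) y.
Proof.
split=> [riG|[ridom riFy]].
  split; last exact: ri_gph_fibre.
  rewrite dom_proj (ri_image xpart_lin xpart_box) //.
  by exists (row_mx x y) => //; rewrite /xpart row_mxKl.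
move: ridom; rewrite dom_proj (ri_image xpart_lin xpart_box) // => -[z riz zx].
have [zE Fz] := gph_split riz.1.
move: zE Fz riz; rewrite zx; set b := ypart z => zE Fxb; rewrite zE => riz.
have [e [e0 ext]] := ri_extend riFy Fxb.
have [t0 t1] := extension_weight e0.
have := ri_segment ncF riz (b := row_mx x (y + e *: (y - b)))
  (proj2 (gph_row_mx _ _) (ext e e0 (lexx e))) t0 t1.
by rewrite !scale_row_mx add_row_mx extension_comb // -scalerDl subrK scale1r.
Qed.

Variable T : set 'rV[R]_p.
Hypothesis ncT : nearly_convex T.
Hypothesis qual : (ri (sv_rge F) `&` ri T) !=set0.

Lemma ri_gph_over_ri : exists w, ri (sv_gph F) w /\ ri T (ypart w).
Proof.
have [y0 [riy0 riTy0]] := qual.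
move: riy0; rewrite rge_proj (ri_image ypart_lin ypart_box) // => -[w riw wy0].
by exists w; rewrite wy0.
Qed.

(* A convex core of gph_over: pairs from cores of gph F and T.  A point z of
   gph_over is approximated by points of ]z, w] for w as above, which lie in
   both cores by the core segment property. *)
Lemma nearly_convex_gph_over : nearly_convex (gph_over T).
Proof.
have [CG [convCG CGsub Gcl Gseg]] := nearly_convex_core ncF.
have [CT [convCT CTsub Tcl Tseg]] := nearly_convex_core ncT.
have [w [riGw riTw]] := ri_gph_over_ri.
exists [set z | CG z /\ CT (ypart z)]; split; last split.
- move=> a b t [CGa CTa] [CGb CTb] t0 t1; split; first exact: convCG.
  by rewrite ypart_lin; apply: convCT.
- by move=> z [CGz CTz]; split; [apply: CGsub | apply: CTsub].
move=> z [Gz Tz]; apply/eclosure_box => e e0.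
have [s0 [s00 small]] := small_steps_box z (z + (z - w)) e0.
have [t0 t1] := extension_weight s00.
set s := s0 / (1 + s0).
have ss0 : s <= s0 by rewrite /s ler_pdivrMr ?ltr_pwDl ?ltW //; nra.
have zE : z + s *: (z - (z + (z - w))) = (1 - s) *: z + s *: w.
  by apply/rowP => i; rewrite !mxE; ring.
exists ((1 - s) *: z + s *: w); split; last by rewrite -zE; apply: small.
split; first by apply: Gseg => //; apply: Gcl.
by rewrite ypart_lin; apply: Tseg => //; apply: Tcl.
Qed.

(* ri (gph_over) = ri (gph F) meet (R^n x ri T), by the extension criterion
   in both directions; w above is what makes the forward direction work. *)
Lemma ri_gph_over z : ri (gph_over T) z <-> ri (sv_gph F) z /\ ri T (ypart z).
Proof.
split=> [riz|[riGz riTz]].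
  have [w [riGw riTw]] := ri_gph_over_ri.
  have [e [e0 ext]] := ri_extend riz (conj riGw.1 riTw.1 : gph_over T w).
  have [Gz' Tz'] := ext e e0 (lexx e).
  have [t0 t1] := extension_weight e0.
  split; first by rewrite -(extension_comb z w e0); exact: ri_segment.
  rewrite -(extension_comb (ypart z) (ypart w) e0) -(image_extension ypart_lin).
  exact: ri_segment.
apply: extend_ri nearly_convex_gph_over (conj riGz.1 riTz.1) _ => y [Gy Ty].
have [e1 [e10 ext1]] := ri_extend riGz Gy.
have [e2 [e20 ext2]] := ri_extend riTz Ty.
exists (Order.min e1 e2); split; first by rewrite lt_min e10.
split; first by apply: ext1; rewrite ?lt_min ?e10 // ge_min lexx.
by rewrite (image_extension ypart_lin); apply: ext2; rewrite ?lt_min ?e10 // ge_min lexx orbT.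
Qed.

End Graph.

End RelativeInterior.

(* Project ri (gph_over Theta) = ri (gph F) meet
   (R^n x ri Theta) to the first factor and describe ri (gph F) fibrewise. *)
Theorem theorem3p3 (R : realType) (n p : nat)
  (F : 'rV[R]_n -> set 'rV[R]_p) (Theta : set 'rV[R]_p) :
  nearly_convex_sv F -> nearly_convex Theta ->
  (ri (sv_rge F) `&` ri Theta) !=set0 ->
  ri (sv_preimage F Theta) =
  ri (sv_dom F) `&` sv_preimage (fun x => ri (F x)) (ri Theta).
Proof.
move=> ncF ncT qual.
have riP := ri_gph_over ncF ncT qual.
rewrite preimage_proj
  (ri_image (@xpart_lin _ _ _) (@xpart_box _ _ _) (nearly_convex_gph_over ncF ncT qual)).
apply/seteqP; split=> [_ [z /riP [riGz riTz] <-]|x [ridom [y [riFy riTy]]]].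
  have [zE _] := gph_split riGz.1.
  rewrite zE in riGz; have [ridom riFz] := (ri_gph ncF _ _).1 riGz.
  by split => //; exists (ypart z).
exists (row_mx x y); last by rewrite /xpart row_mxKl.
by apply/riP; rewrite /ypart row_mxKr; split => //; exact/(ri_gph ncF).
Qed.
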